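(* Consider the adaptive experiment and the ADL-TMLE $\psi(Q_n^* )$ described in the context. Let $\bar g_\infty\in\mathcal G$ be any fixed treatment randomization function and let $Q_\infty=(Q_{\infty,W},Q_{\infty,Y})\in\mathcal Q$ be any fixed element with $Q_{\infty,W}=Q_{0,W}$ and $Q_{\infty,Y}\in\mathcal Q_Y$ (with outcome conditional mean function $\bar Q_\infty$). Then \[ \psi(Q_n^* )-\psi(Q_0)=M_{1,n}(Q_\infty,\bar g_\infty)+M_{2,n}(Q_n^*,Q_\infty,\bar g_n)+M_{3,n}(Q_\infty,\bar g_n,\bar g_\infty), \] where \[ M_{1,n}(Q_\infty,\bar g_\infty):=\frac1n\sum_{i=1}^n\big[D(Q_\infty,\bar g_\infty)(O_i)-P_{Q_0,g_i}D(Q_\infty,\bar g_\infty)\big], \] \[ M_{2,n}(Q_n^*,Q_\infty,\bar g_n):=\frac1n\sum_{i=1}^n\Big\{\big[D(Q_n^*,\bar g_n)(O_i)-P_{Q_0,g_i}D(Q_n^*,\bar g_n)\big]-\big[D(Q_\infty,\bar g_n)(O_i)-P_{Q_0,g_i}D(Q_\infty,\bar g_n)\big]\Big\}, \] \[ M_{3,n}(Q_\infty,\bar g_n,\bar g_\infty):=\frac1n\sum_{i=1}^n\Big\{\big[D(Q_\infty,\bar g_n)(O_i)-P_{Q_0,g_i}D(Q_\infty,\bar g_n)\big]-\big[D(Q_\infty,\bar g_\infty)(O_i)-P_{Q_0,g_i}D(Q_\infty,\bar g_\infty)\big]\Big\}. \]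
   Context: Setting: $\mathcal W$ is a covariate space, $\mathcal A=\{0,1\}$, $\mathcal Y=[0,1]$. $\mathcal Q_W$ is a set of distributions on $\mathcal W$, $\mathcal Q_Y$ a set of conditional distributions of $Y\in\mathcal Y$ given $(A,W)$, and $\mathcal Q=\mathcal Q_W\otimes\mathcal Q_Y$. For $Q=(Q_W,Q_Y)\in\mathcal Q$, $\bar Q(a,w)$ denotes the conditional mean of $Y$ given $A=a,W=w$ under $Q_Y$, and $\psi(Q):=\int[\bar Q(1,w)-\bar Q(0,w)]\,dQ_W(w)$. $\mathcal G$ is a class of treatment randomization functions $g:\mathcal W\times\mathcal A\to[0,1]$, $g(a|w)$ being the probability of $A=a$ given $W=w$. An adaptive experiment enrolls $n$ units sequentially; unit $i$ has data $O_i=(W_i,A_i,Y_i)$, and $\bar O(i)=(O_1,\dots,O_i)$. With true $Q_0=(Q_{0,W},Q_{0,Y})\in\mathcal Q$: $W_i\sim Q_{0,W}$, then $A_i\sim g_i(\cdot|W_i)$ where $g_i\in\mathcal G$ is a known function determined by $\bar O(i-1)$, then $Y_i\sim Q_{0,Y}(\cdot|A_i,W_i)$; i.e. the joint density is $\prod_{i=1}^n q_{0,w}(w_i)g_i(a_i|w_i)q_{0,y}(y_i|a_i,w_i)$. The average design is $\bar g_n:=\frac1n\sum_{i=1}^n g_i$. For $Q\in\mathcal Q$, $g\in\mathcal G$, $P_{Q,g}$ is the law of $(W,A,Y)$ with $W\sim Q_W$, $A|W\sim g(\cdot|W)$, $Y|A,W\sim Q_Y(\cdot|A,W)$, and $P_{Q,g}f=\int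 f\,dP_{Q,g}$ (any data-dependent quantities inside $f$ being held fixed in the integral). For $Q\in\mathcal Q$, $g\in\mathcal G$, define $D(Q,g)(w,a,y)=D_1(\bar Q,g)(w,a,y)+D_2(Q)(w)$ with $D_1(\bar Q,g)(w,a,y)=\frac{2a-1}{g(a|w)}(y-\bar Q(a,w))$ and $D_2(Q)(w)=\bar Q(1,w)-\bar Q(0,w)-\psi(Q)$. ADL-TMLE: given an initial estimate $\bar Q_n$ of $\bar Q_0$, let $H_n(a,w)=(2a-1)/\bar g_n(a|w)$, $\mathrm{logit}\,\bar Q_{n,\epsilon}=\mathrm{logit}\,\bar Q_n+\epsilon H_n$, and $\bar Q_n^*=\bar Q_{n,\epsilon_n}$ with $\epsilon_n$ such that $\frac1n\sum_{i=1}^n\frac{2A_i-1}{\bar g_n(A_i|W_i)}[Y_i-\bar Q_n^*(A_i,W_i)]=0$. Then $Q_n^*=(Q_{n,W},Q_{n,Y}^* )$ where $Q_{n,W}$ is the empirical distribution of $W_1,\dots,W_n$ and $Q^*_{n,Y}$ is an outcome distribution with conditional mean $\bar Q_n^*$, so $\psi(Q_n^* )=\frac1n\sum_{i=1}^n[\bar Q_n^*(1,W_i)-\bar Q_n^*(0,W_i)]$. *)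

From HB Require Import structures.
From mathcomp Require Import all_boot all_order all_algebra.
From mathcomp Require Import all_classical all_reals all_analysis.
Set Implicit Arguments. Unset Strict Implicit. Unset Printing Implicit Defensive.
Import Order.TTheory GRing.Theory Num.Theory.
Import numFieldNormedType.Exports.
Local Open Scope classical_set_scope.
Local Open Scope ring_scope.

Section ADLTMLE.
Context {R : realType} {d : measure_display} {W : measurableType d}.

(* Treatment A in {0,1} is encoded as bool (true = 1). *)
Definition sgnA (a : bool) : R := if a then 1 else -1.

(* an element of the design class G: g a w = g(a|w) *)
Definition is_design (delta : R) (g : bool -> W -> R) : Prop :=
  (forall a, measurable_fun setT (g a)) /\
  (forall a w, delta <= g a w) /\
  (forall w, g true w + g false w = 1).

Definition Qbar_of (QY : bool -> W -> probability R R) (a : bool) (w : W) : R :=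
  Rintegral (QY a w) setT (fun y => y).

Definition psi_of (QW : probability W R) (Qb : bool -> W -> R) : R :=
  Rintegral QW setT (fun w => Qb true w - Qb false w).

(* D(Q,g) where Q enters through Qbar and psi(Q) *)
Definition D1 (Qb : bool -> W -> R) (g : bool -> W -> R) (w : W) (a : bool) (y : R) : R :=
  sgnA a / g a w * (y - Qb a w).
Definition D2 (Qb : bool -> W -> R) (psiQ : R) (w : W) : R :=
  Qb true w - Qb false w - psiQ.
Definition Dfun (Qb : bool -> W -> R) (psiQ : R) (g : bool -> W -> R)
  (w : W) (a : bool) (y : R) : R := D1 Qb g w a y + D2 Qb psiQ w.

Definition Pexp (QW : probability W R) (QY : bool -> W -> probability R R)
  (g : bool -> W -> R) (f : W -> bool -> R -> R) : R :=
  Rintegral QW setT (fun w =>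
    g true w * Rintegral (QY true w) setT (f w true)
  + g false w * Rintegral (QY false w) setT (f w false)).

Definition gbar (n : nat) (gs : nat -> bool -> W -> R) (a : bool) (w : W) : R :=
  n%:R^-1 * \sum_(i < n) gs i a w.

Definition expit (x : R) : R := 1 / (1 + expR (- x)).
Definition logit (p : R) : R := ln (p / (1 - p)).

Definition Qbar_eps (Qn : bool -> W -> R) (gb : bool -> W -> R) (eps : R)
  (a : bool) (w : W) : R :=
  expit (logit (Qn a w) + eps * (sgnA a / gb a w)).

(* psi(Q) with Q_W the empirical distribution of W_1..W_n *)
Definition psi_emp (n : nat) (Wd : nat -> W) (Qb : bool -> W -> R) : R :=
  n%:R^-1 * \sum_(i < n) (Qb true (Wd i) - Qb false (Wd i)).

End ADLTMLE.

From HB Require Import structures.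
From mathcomp Require Import all_boot all_order all_algebra.
From mathcomp Require Import all_classical all_reals all_analysis.
From mathcomp Require Import measurable_realfun ring lra.
Import Order.TTheory GRing.Theory Num.Theory.
Import numFieldNormedType.Exports.
Local Open Scope classical_set_scope.
Local Open Scope ring_scope.

(* Adding M_1, M_2 and M_3 telescopes to the average of the centred terms
   D(Q_n^*, gbar_n)(O_i) - P_{Q_0,g_i} D(Q_n^*, gbar_n).  The empirical part
   vanishes: the D_1 part is the targeting score equation, and the D_2 part
   is centred because the plug-in estimate is an empirical mean over W_i.
   The expectations are linear in the design, so they add up to
   n P_{Q_0,gbar_n} D(Q_n^*, gbar_n); under a design g the inverse weights
   of D(Q, g) cancel, leaving psi(Q_0) - psi(Q).  All integrals involved are
   of bounded measurable functions, designs being bounded away from 0. *)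

Section bounded_measurable_functions.
Context {R : realType} {d : measure_display} {T : measurableType d}.
Implicit Types (P : probability T R) (f g : T -> R).

Lemma fine_probability_setT P : fine (P setT) = 1.
Proof. by rewrite probability_setT. Qed.

Definition bounded_measurable f :=
  measurable_fun setT f /\ exists K : R, forall x, `|f x| <= K.

Lemma bounded_measurable_integrable P f :
  bounded_measurable f -> P.-integrable setT (EFin \o f).
Proof.
case=> mf [K fK]; apply: measurable_bounded_integrable => //.
  exact: le_lt_trans (probability_le1 P measurableT) (ltry 1).
exists K; split; first by rewrite num_real.
by move=> M KM x _; apply: le_trans (fK x) (ltW KM).
Qed.

Lemma bounded_measurable_cst c : bounded_measurable (fun=> c).
Proof. by split; [exact: measurable_cst | exists `|c|]. Qed.

Lemma bounded_measurableD f g : bounded_measurable f -> bounded_measurable g ->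
  bounded_measurable (fun x => f x + g x).
Proof.
case=> mf [Kf fK] [mg [Kg gK]]; split; first exact: measurable_funD.
by exists (Kf + Kg) => x; apply: le_trans (ler_normD _ _) (lerD (fK x) (gK x)).
Qed.

Lemma bounded_measurableB f g : bounded_measurable f -> bounded_measurable g ->
  bounded_measurable (fun x => f x - g x).
Proof.
case=> mf [Kf fK] [mg [Kg gK]]; split; first exact: measurable_funB.
by exists (Kf + Kg) => x; apply: le_trans (ler_normB _ _) (lerD (fK x) (gK x)).
Qed.

Lemma bounded_measurableM f g : bounded_measurable f -> bounded_measurable g ->
  bounded_measurable (fun x => f x * g x).
Proof.
case=> mf [Kf fK] [mg [Kg gK]]; split; first exact: measurable_funM.
by exists (Kf * Kg) => x; rewrite normrM ler_pM.
Qed.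

Lemma bounded_measurable_sum (I : Type) (s : seq I) (F : I -> T -> R) :
  (forall i, bounded_measurable (F i)) ->
  bounded_measurable (fun x => \sum_(i <- s) F i x).
Proof.
move=> bF; elim: s => [|i s IHs].
  by under eq_fun do rewrite big_nil; exact: bounded_measurable_cst.
by under eq_fun do rewrite big_cons; exact: bounded_measurableD.
Qed.

Lemma measurable_fun_inv_pos f : (forall x, 0 < f x) -> measurable_fun setT f ->
  measurable_fun setT (fun x => (f x)^-1).
Proof.
move=> f_gt0 mf.
have -> : (fun x => (f x)^-1) = (fun x => expR (- ln (f x))).
  by apply/funext => x; rewrite expRN lnK // posrE.
by apply: measurableT_comp => //; apply: measurableT_comp => //; exact: measurableT_comp.
Qed.

Lemma bounded_measurable_inv f c : 0 < c -> (forall x, c <= f x) ->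
  measurable_fun setT f -> bounded_measurable (fun x => (f x)^-1).
Proof.
move=> c_gt0 cf mf; have f_gt0 x : 0 < f x by exact: lt_le_trans (cf x).
split; first exact: measurable_fun_inv_pos.
exists c^-1 => x; rewrite ger0_norm; last by rewrite invr_ge0 ltW.
by rewrite lef_pV2 ?posrE.
Qed.

Lemma Rintegral_sum P (I : Type) (s : seq I) (F : I -> T -> R) :
  (forall i, bounded_measurable (F i)) ->
  Rintegral P setT (fun x => \sum_(i <- s) F i x) =
  \sum_(i <- s) Rintegral P setT (F i).
Proof.
move=> bF; elim: s => [|i s IHs].
  by under eq_Rintegral do rewrite big_nil; rewrite Rintegral_cst // mul0r big_nil.
under eq_Rintegral do rewrite big_cons.
rewrite RintegralD ?big_cons ?IHs //; apply: bounded_measurable_integrable => //.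
exact: bounded_measurable_sum.
Qed.

End bounded_measurable_functions.

Section unit_interval_supported.
Context {R : realType} (P : probability R R).
Hypothesis P01 : P [set y : R | 0 <= y <= 1] = 1%E.

Let unit_itv := [set y : R | 0 <= y <= 1].

Let measurable_unit_itv : measurable unit_itv.
Proof.
rewrite (_ : unit_itv = `[0, 1]%classic); first exact: measurable_itv.
by apply/seteqP; split => y /=; rewrite in_itv.
Qed.

Let P_outside_unit_itv : P (~` unit_itv) = 0%E.
Proof. by rewrite probability_setC // P01 subee. Qed.

Let Rintegral_unit_itv f : P.-integrable setT (EFin \o f) ->
  Rintegral P setT f = Rintegral P unit_itv f.
Proof.
move=> intf; congr fine.
by rewrite (negligible_integral (measurableC measurable_unit_itv)) // setTD setCK.
Qed.

Lemma integrable_id_unit_supported : P.-integrable setT (EFin \o (fun y : R => y)).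
Proof.
rewrite (negligible_integrable (measurableC measurable_unit_itv)) // ?setTD ?setCK //.
  apply: measurable_bounded_integrable => //.
    exact: le_lt_trans (probability_le1 P measurable_unit_itv) (ltry 1).
  exists 1; split; first by rewrite num_real.
  by move=> M M_gt1 y /andP[y0 y1] /=; rewrite ger0_norm // (le_trans y1) ?ltW.
by apply/measurable_EFinP; exact: measurable_id.
Qed.

Lemma mean_unit_supported : 0 <= Rintegral P setT (fun y => y) <= 1.
Proof.
rewrite Rintegral_unit_itv; last exact: integrable_id_unit_supported.
apply/andP; split; first by apply: Rintegral_ge0 => y /andP[].
apply: le_trans (le_Rintegral (f2 := fun=> 1) _ _ _ _) _ => //.
- by apply: integrableS integrable_id_unit_supported.
- exact: finite_measure_integrable_cst.
- by move=> y /andP[].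
- rewrite Rintegral_cst // mul1r [fine _](_ : _ = fine 1%E) //.
  by congr fine; exact: P01.
Qed.

Lemma Rintegral_affine_unit_supported c1 q c2 :
  Rintegral P setT (fun y => c1 * (y - q) + c2) =
  c1 * (Rintegral P setT (fun y => y) - q) + c2.
Proof.
have intZ : P.-integrable setT (EFin \o (fun y => c1 * y)).
  by apply: eq_integrable (integrableZl _ _ integrable_id_unit_supported).
rewrite (@eq_Rintegral _ _ _ P setT (fun y => c1 * y + (c2 - c1 * q))); last first.
  by move=> y _; ring.
rewrite RintegralD //; last exact: finite_measure_integrable_cst.
rewrite RintegralZl //; last exact: integrable_id_unit_supported.
by rewrite Rintegral_cst // fine_probability_setT mulr1; ring.
Qed.

End unit_interval_supported.

Section designs.
Context {R : realType} {d : measure_display} {W : measurableType d}.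
Context {delta : R} (delta_gt0 : 0 < delta).
Implicit Types g : bool -> W -> R.

Lemma design_gt0 g a w : is_design delta g -> 0 < g a w.
Proof. by case=> _ [g_ge _]; exact: lt_le_trans (g_ge a w). Qed.

Lemma design_le1 g a w : is_design delta g -> g a w <= 1.
Proof.
move=> gG; have := design_gt0 g (~~ a) w gG; case: gG => _ [_ /(_ w)].
by case: a => /=; lra.
Qed.

Lemma bounded_measurable_design g a : is_design delta g -> bounded_measurable (g a).
Proof.
move=> gG; split; first by case: gG.
by exists 1 => w; rewrite ger0_norm ?design_le1 // ltW // design_gt0.
Qed.

Lemma bounded_measurable_design_inv g a : is_design delta g ->
  bounded_measurable (fun w => (g a w)^-1).
Proof. by case=> mg [g_ge _]; exact: bounded_measurable_inv delta_gt0 _ _. Qed.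

Lemma sum_designs_gbar n (gs : nat -> bool -> W -> R) a w : (0 < n)%N ->
  \sum_(i < n) gs i a w = n%:R * gbar n gs a w.
Proof. by move=> n_gt0; rewrite /gbar mulrA mulfV ?mul1r // pnatr_eq0 -lt0n. Qed.

Lemma is_design_gbar n (gs : nat -> bool -> W -> R) : (0 < n)%N ->
  (forall i, (i < n)%N -> is_design delta (gs i)) -> is_design delta (gbar n gs).
Proof.
move=> n_gt0 gsG; have n0 : n%:R != 0 :> R by rewrite pnatr_eq0 -lt0n.
split; [|split].
- move=> a; apply: measurable_funM; first exact: measurable_cst.
  by apply: measurable_sum => i; case: (gsG i (ltn_ord i)).
- move=> a w; rewrite -[delta](mulKf n0) /gbar ler_wpM2l ?invr_ge0 ?ler0n //.
  have -> : n%:R * delta = \sum_(i < n) delta by rewrite sumr_const card_ord mulr_natl.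
  by apply: ler_sum => i _; case: (gsG i (ltn_ord i)) => _ [].
- move=> w; rewrite /gbar -mulrDr -big_split /=.
  rewrite (eq_bigr (fun=> 1)) ?sumr_const ?card_ord ?mulVf //.
  by move=> i _; case: (gsG i (ltn_ord i)) => _ [].
Qed.

End designs.

Section efficient_influence_curve.
Context {R : realType} {d : measure_display} {W : measurableType d}.
Implicit Types (Qb g : bool -> W -> R) (psiQ : R).

Lemma Dfun_design_mean Qb Q0b psiQ g w :
  g true w + g false w = 1 -> g true w != 0 -> g false w != 0 ->
  g true w * Dfun Qb psiQ g w true (Q0b true w)
  + g false w * Dfun Qb psiQ g w false (Q0b false w)
  = Q0b true w - Q0b false w - psiQ.
Proof.
move=> g1 gt0 gf0; rewrite /Dfun /D1 /D2 /sgnA.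
have gf : g false w = 1 - g true w by lra.
by rewrite gf in gf0 *; field; rewrite gt0 gf0.
Qed.

Lemma sum_Dfun_psi_emp n (Wd : nat -> W) (Ad : nat -> bool) (Yd : nat -> R) Qb g :
  (0 < n)%N -> n%:R^-1 * \sum_(i < n) D1 Qb g (Wd i) (Ad i) (Yd i) = 0 ->
  \sum_(i < n) Dfun Qb (psi_emp n Wd Qb) g (Wd i) (Ad i) (Yd i) = 0.
Proof.
move=> n_gt0; have n0 : n%:R != 0 :> R by rewrite pnatr_eq0 -lt0n.
move=> /eqP; rewrite mulf_eq0 invr_eq0 (negbTE n0) /= => /eqP score.
rewrite /Dfun big_split /= score add0r /D2 sumrB sumr_const card_ord /psi_emp.
by rewrite -[X in _ - X]mulr_natl mulVKf // subrr.
Qed.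

End efficient_influence_curve.

Section targeted_update.
Context {R : realType} {d : measure_display} {W : measurableType d}.

Lemma bounded_measurable_expit (f : W -> R) : measurable_fun setT f ->
  bounded_measurable (fun w => expit (f w)).
Proof.
move=> mf; apply: bounded_measurableM (bounded_measurable_cst 1) _.
apply: (@bounded_measurable_inv _ _ _ _ 1) => //.
  by move=> w; rewrite lerDl expR_ge0.
apply: measurable_funD; first exact: measurable_cst.
by apply: measurableT_comp => //; exact: measurable_funN.
Qed.

Lemma measurable_logit (f : W -> R) : (forall w, f w < 1) -> measurable_fun setT f ->
  measurable_fun setT (fun w => logit (f w)).
Proof.
move=> f_lt1 mf; rewrite /logit; apply: measurableT_comp => //.
apply: measurable_funM => //.
apply: (@measurable_fun_inv_pos _ _ _ (fun w => 1 - f w)).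
  by move=> w; rewrite subr_gt0.
by apply: measurable_funB => //; exact: measurable_cst.
Qed.

Lemma bounded_measurable_Qbar_eps {delta} {Qn gb : bool -> W -> R} {eps a} :
  0 < delta -> is_design delta gb ->
  (forall a, measurable_fun setT (Qn a)) -> (forall a w, Qn a w < 1) ->
  bounded_measurable (Qbar_eps Qn gb eps a).
Proof.
move=> delta_gt0 gbG mQn Qn_lt1; apply: bounded_measurable_expit.
apply: measurable_funD; first exact: measurable_logit.
apply: measurable_funM; first exact: measurable_cst.
apply: measurable_funM; first exact: measurable_cst.
by case: (bounded_measurable_design_inv delta_gt0 gb a gbG).
Qed.

End targeted_update.

Section expected_influence_curve.
Context {R : realType} {d : measure_display} {W : measurableType d}.
Context {Q0W : probability W R} {Q0Y : bool -> W -> probability R R}.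
Hypothesis Q0Y01 : forall a w, Q0Y a w [set y : R | 0 <= y <= 1] = 1%E.

Lemma Pexp_Dfun Qb psiQ (g g' : bool -> W -> R) :
  Pexp Q0W Q0Y g (Dfun Qb psiQ g') =
  Rintegral Q0W setT (fun w =>
      g true w * Dfun Qb psiQ g' w true (Qbar_of Q0Y true w)
    + g false w * Dfun Qb psiQ g' w false (Qbar_of Q0Y false w)).
Proof.
apply: eq_Rintegral => w _.
by rewrite !(Rintegral_affine_unit_supported _ (Q0Y01 _ w)).
Qed.

Lemma sum_Pexp_Dfun_gbar {delta n} {gs : nat -> bool -> W -> R} {Qb psiQ} :
  0 < delta -> (0 < n)%N -> (forall i, (i < n)%N -> is_design delta (gs i)) ->
  (forall a, measurable_fun setT (Qbar_of Q0Y a)) ->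
  (forall a, bounded_measurable (Qb a)) ->
  \sum_(i < n) Pexp Q0W Q0Y (gs i) (Dfun Qb psiQ (gbar n gs)) =
  n%:R * (psi_of Q0W (Qbar_of Q0Y) - psiQ).
Proof.
move=> delta_gt0 n_gt0 gsG mQ0 bQb.
have gbG : is_design delta (gbar n gs) by exact: is_design_gbar.
have bQ0 a : bounded_measurable (Qbar_of Q0Y a).
  split => //; exists 1 => w.
  by have /andP[Q0_ge0 Q0_le1] := mean_unit_supported _ (Q0Y01 a w); rewrite ger0_norm.
pose Dmean a w := Dfun Qb psiQ (gbar n gs) w a (Qbar_of Q0Y a w).
have bDmean a : bounded_measurable (Dmean a).
  rewrite /Dmean /Dfun /D1 /D2.
  apply: bounded_measurableD; last by apply: bounded_measurableB;
    [exact: bounded_measurableB | exact: bounded_measurable_cst].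
  apply: bounded_measurableM; last exact: bounded_measurableB.
  apply: bounded_measurableM (bounded_measurable_cst _) _.
  exact: bounded_measurable_design_inv gbG.
under eq_bigr do rewrite Pexp_Dfun.
rewrite -Rintegral_sum; last first.
  move=> i; have giG := gsG i (ltn_ord i).
  by apply: bounded_measurableD; apply: bounded_measurableM;
    first [exact: bounded_measurable_design giG | exact: bDmean].
rewrite (@eq_Rintegral _ _ _ Q0W setT
  (fun w => n%:R * (Qbar_of Q0Y true w - Qbar_of Q0Y false w - psiQ))); last first.
  move=> w _; rewrite big_split /= -!mulr_suml !sum_designs_gbar // -mulrA -mulrA -mulrDr.
  rewrite Dfun_design_mean //; first by case: gbG => _ [_].
    by rewrite gt_eqF // (design_gt0 delta_gt0).
  by rewrite gt_eqF // (design_gt0 delta_gt0).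
rewrite RintegralZl //; last first.
  apply: bounded_measurable_integrable.
  by apply: bounded_measurableB; [exact: bounded_measurableB | exact: bounded_measurable_cst].
rewrite RintegralB //; last exact: finite_measure_integrable_cst.
  by rewrite Rintegral_cst // fine_probability_setT mulr1.
by apply: bounded_measurable_integrable; exact: bounded_measurableB.
Qed.

End expected_influence_curve.

Theorem theorem2 (R : realType) (d : measure_display) (W : measurableType d)
  (delta : R)
  (Q0W : probability W R) (Q0Y : bool -> W -> probability R R)
  (QinfY : bool -> W -> probability R R)
  (ginf : bool -> W -> R)
  (n : nat) (gs : nat -> bool -> W -> R)
  (Wd : nat -> W) (Ad : nat -> bool) (Yd : nat -> R)
  (Qn : bool -> W -> R) (eps : R) :
  0 < delta ->
  (0 < n)%N ->
  (* outcomes take values in [0,1] *)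
  (forall a w, Q0Y a w [set y : R | 0 <= y <= 1] = 1%E) ->
  (forall a w, QinfY a w [set y : R | 0 <= y <= 1] = 1%E) ->
  (forall a, measurable_fun setT (Qbar_of Q0Y a)) ->
  (forall a, measurable_fun setT (Qbar_of QinfY a)) ->
  (forall i, (i < n)%N -> 0 <= Yd i <= 1) ->
  (* designs g_i and the fixed design gbar_infinity belong to G *)
  (forall i, (i < n)%N -> is_design delta (gs i)) ->
  is_design delta ginf ->
  (* initial estimate Qbar_n *)
  (forall a, measurable_fun setT (Qn a)) ->
  (forall a w, 0 < Qn a w < 1) ->
  (* TMLE score equation defining eps_n *)
  n%:R^-1 * \sum_(i < n)
      (sgnA (Ad i) / gbar n gs (Ad i) (Wd i)
        * (Yd i - Qbar_eps Qn (gbar n gs) eps (Ad i) (Wd i))) = 0 ->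
  let gbn := gbar n gs in
  let Qstar := Qbar_eps Qn gbn eps in
  let psiStar := psi_emp n Wd Qstar in
  let Qinf := Qbar_of QinfY in
  let psiInf := psi_of Q0W Qinf in
  let psi0 := psi_of Q0W (Qbar_of Q0Y) in
  let cen (i : nat) (f : W -> bool -> R -> R) :=
      f (Wd i) (Ad i) (Yd i) - Pexp Q0W Q0Y (gs i) f in
  let M1 := n%:R^-1 * \sum_(i < n) cen i (Dfun Qinf psiInf ginf) in
  let M2 := n%:R^-1 * \sum_(i < n)
      (cen i (Dfun Qstar psiStar gbn) - cen i (Dfun Qinf psiInf gbn)) in
  let M3 := n%:R^-1 * \sum_(i < n)
      (cen i (Dfun Qinf psiInf gbn) - cen i (Dfun Qinf psiInf ginf)) in
  psiStar - psi0 = M1 + M2 + M3.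
Proof.
move=> delta_gt0 n_gt0 Q0Y01 _ mQ0 _ _ gsG _ mQn Qn01 score.
move=> gbn Qstar psiStar Qinf psiInf psi0 cen M1 M2 M3.
have -> : M1 + M2 + M3 = n%:R^-1 * \sum_(i < n) cen i (Dfun Qstar psiStar gbn).
  rewrite -!mulrDr -!big_split /=; congr (_ * _).
  by apply: eq_bigr => i _; ring.
have gbG : is_design delta gbn by exact: is_design_gbar.
have Qn_lt1 a w : Qn a w < 1 by case/andP: (Qn01 a w).
have bQstar a : bounded_measurable (Qstar a).
  exact: bounded_measurable_Qbar_eps delta_gt0 gbG mQn Qn_lt1.
rewrite /cen sumrB sum_Dfun_psi_emp // add0r.
rewrite (sum_Pexp_Dfun_gbar Q0Y01 delta_gt0 n_gt0 gsG mQ0 bQstar).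
by rewrite mulrN mulKf ?opprB // pnatr_eq0 -lt0n.
Qed.
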